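(* Let $I=\{1,\dots,k+\ell\}\subseteq V$ where $C_1=\{1,\dots,k\}$ and $C_2=\{k+1,\dots,k+\ell\}$ are disjoint cliques of $G$ with no edges between $C_1$ and $C_2$. Let $X_I$ be a symmetric matrix with $X_I\succeq 0$, $X_I\geq 0$ (entrywise), diagonal entries $x_1,\dots,x_{k+\ell}$, $(X_I)_{i,j}=0$ whenever $i\neq j$ lie in the same clique $C_1$ or $C_2$, and entries $X_{i,k+j}$ for $1\leq i\leq k$, $1\leq j\leq \ell$. Then $X_I\in\mathrm{STAB}^2(G_I)$ if and only if $$\sum_{j=1}^{\ell}X_{i,k+j}\leq x_i\ (1\leq i\leq k),\qquad \sum_{i=1}^{k}X_{i,k+j}\leq x_{k+j}\ (1\leq j\leq \ell),\qquad \sum_{i=1}^{k+\ell}x_i\leq 1+\sum_{i=1}^k\sum_{j=1}^{\ell}X_{i,k+j}.$$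
   Context: Let $G$ be a simple graph with vertex set $V=\{1,\dots,n\}$ and edge set $E$; $G_I$ denotes the subgraph induced by $I\subseteq V$. For a graph $H$ with vertex set $I$, let $S(H)=\{s\in\{0,1\}^I: s_is_j=0\ \forall [i,j]\in E(H)\}$ (incidence vectors of stable sets, including the zero vector) and $\mathrm{STAB}^2(H)=\operatorname{conv}\{ss^T: s\in S(H)\}$. *)

From mathcomp Require Import all_boot all_order all_algebra.
From mathcomp Require Import reals.
Set Implicit Arguments. Unset Strict Implicit. Unset Printing Implicit Defensive.
Import Order.TTheory GRing.Theory Num.Theory.
Local Open Scope ring_scope.

Definition simple_graph (T : finType) (e : rel T) : Prop :=
  (forall x y, e x y = e y x) /\ (forall x, ~~ e x x).

(* Induced subgraph G_I on I = {0,..,m-1} (first m vertices) of a graph on 'I_n. *)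
Definition induced_first (n m : nat) (hmn : (m <= n)%N) (e : rel 'I_n) : rel 'I_m :=
  fun i j => e (widen_ord hmn i) (widen_ord hmn j).

Definition stable_vec (m : nat) (e : rel 'I_m) (s : {ffun 'I_m -> bool}) : bool :=
  [forall i, forall j, e i j ==> ~~ (s i && s j)].

Definition outer01 (R : ringType) (m : nat) (s : {ffun 'I_m -> bool}) : 'M[R]_m :=
  \matrix_(i, j) ((s i)%:R * (s j)%:R).

Definition STAB2 (R : realType) (m : nat) (e : rel 'I_m) (X : 'M[R]_m) : Prop :=
  exists lam : {ffun {ffun 'I_m -> bool} -> R},
    (forall s, 0 <= lam s) /\
    (forall s, ~~ stable_vec e s -> lam s = 0) /\
    \sum_s lam s = 1 /\
    X = \sum_s lam s *: outer01 R s.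

Definition psd (R : realType) (m : nat) (X : 'M[R]_m) : Prop :=
  X^T = X /\ forall v : 'cV[R]_m, 0 <= (v^T *m X *m v) 0 0.

From mathcomp Require Import all_boot all_order all_algebra.
From mathcomp Require Import reals.
From mathcomp Require Import ring lra.
Import Order.TTheory GRing.Theory Num.Theory.
Local Open Scope ring_scope.

(* A stable set s of G_I meets each clique in at most one vertex, so with
   a = |s ∩ C1| and b = |s ∩ C2| in [0, 1] the three inequalities hold for s s^T,
   the last one because (1 - a)(1 - b) >= 0; being linear, they pass to convex
   combinations. Conversely X is an explicit convex combination of the s s^T for
   the stable sets {i, k + j} (weight X_{i,k+j}), {i} and {k + j} (weights the
   slacks of the first two inequalities) and the empty set (weight the slack of
   the third): these weights sum to 1 identically and are nonnegative exactly
   when the inequalities hold. *)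

Lemma sum_option (R : nmodType) (T : finType) (F : option T -> R) :
  \sum_o F o = F None + \sum_t F (Some t).
Proof.
rewrite (bigD1 None) //=; congr (_ + _).
rewrite (reindex_omap Some id); last by case.
by apply: eq_bigl => t; rewrite /= eqxx.
Qed.

Lemma sum_pair_fst (R : nmodType) (A B : finType) (a : A) (F : A * B -> R) :
  \sum_(o | o.1 == a) F o = \sum_b F (a, b).
Proof.
rewrite -(big_pred1_eq +%R a (fun a' => \sum_b F (a', b))) pair_big_dep.
by apply: eq_big => [o|[]]; rewrite ?andbT.
Qed.

Lemma sum_pair_snd (R : nmodType) (A B : finType) (b : B) (F : A * B -> R) :
  \sum_(o | o.2 == b) F o = \sum_a F (a, b).
Proof.
rewrite -(big_pred1_eq +%R b (fun b' => \sum_a F (a, b'))) exchange_big pair_big_dep.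
by apply: eq_big => [o|[]]; rewrite ?andbT.
Qed.

Lemma natr_mulb (R : pzSemiRingType) (b c : bool) : b%:R * c%:R = (b && c)%:R :> R.
Proof. by rewrite -natrM mulnb. Qed.

Section Stab2.
Variables (R : realType) (m : nat) (e : rel 'I_m).

Lemma STAB2_valid_ineq (f : 'M[R]_m -> R) (d : R) (X : 'M[R]_m) :
  linear_for *%R f -> (forall s, stable_vec e s -> f (outer01 R s) <= d) ->
  STAB2 e X -> f X <= d.
Proof.
move=> f_lin f_valid [lam [lam_ge0 [lam_stable [lam_sum ->]]]].
have fD M N : f (M + N) = f M + f N by rewrite -{1}[M]scale1r f_lin mul1r.
have f0 : f 0 = 0 by apply: (addrI (f 0)); rewrite -fD !addr0.
have fZ a M : f (a *: M) = a * f M by rewrite -[a *: M]addr0 f_lin f0 addr0.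
rewrite (big_morph f fD f0) -[d]mul1r -lam_sum mulr_suml.
apply: ler_sum => s _; rewrite fZ.
case: (boolP (stable_vec e s)) => [s_st|s_nst]; last by rewrite lam_stable ?mul0r.
by rewrite ler_wpM2l ?f_valid.
Qed.

Lemma outer01_sum_entry (O : finType) (w : O -> R) (st : O -> {ffun 'I_m -> bool}) p q :
  (\sum_o w o *: outer01 R (st o)) p q = \sum_(o | st o p && st o q) w o.
Proof.
rewrite summxE [RHS]big_mkcond; apply: eq_bigr => o _.
by rewrite !mxE natr_mulb; case: (_ && _); rewrite ?mulr1 ?mulr0.
Qed.

Lemma STAB2_of_family (O : finType) (w : O -> R) (st : O -> {ffun 'I_m -> bool})
    (X : 'M[R]_m) :
  (forall o, 0 <= w o) -> (forall o, stable_vec e (st o)) -> \sum_o w o = 1 ->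
  X = \sum_o w o *: outer01 R (st o) -> STAB2 e X.
Proof.
move=> w_ge0 st_stable w_sum ->.
exists [ffun s => \sum_(o | st o == s) w o]; split; [|split; [|split]].
- by move=> s; rewrite ffunE sumr_ge0.
- move=> s s_nst; rewrite ffunE big_pred0 // => o.
  by apply: contraNF s_nst => /eqP <-.
- under eq_bigr do rewrite ffunE.
  by rewrite -w_sum [RHS](partition_big st xpredT).
- under [RHS]eq_bigr do rewrite ffunE scaler_suml.
  rewrite (partition_big st xpredT) //; apply: eq_bigr => s _.
  by apply: eq_bigr => o /eqP ->.
Qed.

End Stab2.

Lemma stable_clique_sum_le1 (R : numDomainType) m (e : rel 'I_m) (T : finType)
    (f : T -> 'I_m) (s : {ffun 'I_m -> bool}) :
  stable_vec e s -> (forall x y, x != y -> e (f x) (f y)) ->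
  \sum_x (s (f x))%:R <= 1 :> R.
Proof.
move=> /forallP s_st f_clique.
case: (pickP (fun x => s (f x))) => [x sx | no_x]; last first.
  by rewrite big1 // => x _; rewrite no_x.
rewrite (bigD1 x) //= sx big1 ?addr0 // => y yx.
have /implyP/(_ (f_clique _ _ yx)) := forallP (s_st (f y)) (f x).
by rewrite sx andbT => /negbTE ->.
Qed.

Section TwoCliques.
Variables (R : realType) (k l : nat) (e : rel 'I_(k + l)) (X : 'M[R]_(k + l)).

Definition two_clique_ineqs : Prop :=
  [/\ forall i : 'I_k,
        \sum_(j < l) X (lshift l i) (rshift k j) <= X (lshift l i) (lshift l i),
      forall j : 'I_l,
        \sum_(i < k) X (lshift l i) (rshift k j) <= X (rshift k j) (rshift k j)
    & \sum_(p < k + l) X p p <=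
        1 + \sum_(i < k) \sum_(j < l) X (lshift l i) (rshift k j)].

Lemma STAB2_two_clique_ineqs :
  (forall i i' : 'I_k, i != i' -> e (lshift l i) (lshift l i')) ->
  (forall j j' : 'I_l, j != j' -> e (rshift k j) (rshift k j')) ->
  STAB2 e X -> two_clique_ineqs.
Proof.
move=> C1_clique C2_clique X_stab.
have a_le1 s : stable_vec e s -> \sum_i (s (lshift l i))%:R <= 1 :> R.
  by move=> s_st; apply: stable_clique_sum_le1 s_st _.
have b_le1 s : stable_vec e s -> \sum_j (s (rshift k j))%:R <= 1 :> R.
  by move=> s_st; apply: stable_clique_sum_le1 s_st _.
split.
- move=> i; rewrite -subr_le0.
  apply: (@STAB2_valid_ineq _ _ e (fun M =>
    \sum_j M (lshift l i) (rshift k j) - M (lshift l i) (lshift l i))) X_stab.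
    move=> a M N /=; rewrite !mxE; under eq_bigr do rewrite !mxE.
    by rewrite big_split -mulr_sumr /=; ring.
  move=> s s_st /=; rewrite mxE; under eq_bigr do rewrite mxE.
  rewrite -mulr_sumr natr_mulb andbb.
  by case: (s _); rewrite ?mul1r ?mul0r ?subrr // subr_le0 b_le1.
- move=> j; rewrite -subr_le0.
  apply: (@STAB2_valid_ineq _ _ e (fun M =>
    \sum_i M (lshift l i) (rshift k j) - M (rshift k j) (rshift k j))) X_stab.
    move=> a M N /=; rewrite !mxE; under eq_bigr do rewrite !mxE.
    by rewrite big_split -mulr_sumr /=; ring.
  move=> s s_st /=; rewrite mxE; under eq_bigr do rewrite mxE.
  rewrite -mulr_suml natr_mulb andbb.
  by case: (s _); rewrite ?mulr1 ?mulr0 ?subrr // subr_le0 a_le1.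
- rewrite addrC -lerBlDl.
  apply: (@STAB2_valid_ineq _ _ e (fun M =>
    \sum_p M p p - \sum_i \sum_j M (lshift l i) (rshift k j))) X_stab.
    move=> a M N /=; under eq_bigr do rewrite !mxE.
    under [in S in _ - S]eq_bigr do under eq_bigr do rewrite !mxE.
    under [in S in _ - S]eq_bigr do rewrite big_split -mulr_sumr.
    by rewrite !big_split -!mulr_sumr /=; ring.
  move=> s s_st /=; under eq_bigr do rewrite mxE natr_mulb andbb.
  under [in S in _ - S]eq_bigr do under eq_bigr do rewrite mxE.
  rewrite big_split_ord -big_distrlr /=.
  set a := \sum_i _; set b := \sum_j _.
  have a_ge0 : 0 <= a by apply: sumr_ge0.
  have b_ge0 : 0 <= b by apply: sumr_ge0.
  have := a_le1 _ s_st; have := b_le1 _ s_st; rewrite -/a -/b.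
  nra.
Qed.

(* [o = (Some i, Some j)] encodes the stable set {i, k + j}; [None] leaves that clique unused. *)
Definition pair_vec (o : option 'I_k * option 'I_l) : {ffun 'I_(k + l) -> bool} :=
  [ffun p => match split p with inl i => o.1 == Some i | inr j => o.2 == Some j end].

Lemma pair_vec_lshift o i : pair_vec o (lshift l i) = (o.1 == Some i).
Proof. by rewrite ffunE (unsplitK (inl _ i)). Qed.

Lemma pair_vec_rshift o j : pair_vec o (rshift k j) = (o.2 == Some j).
Proof. by rewrite ffunE (unsplitK (inr _ j)). Qed.

Lemma pair_vec_stable o :
  (forall p, ~~ e p p) ->
  (forall i j, ~~ e (lshift l i) (rshift k j)) ->
  (forall i j, ~~ e (rshift k j) (lshift l i)) ->
  stable_vec e (pair_vec o).
Proof.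
move=> e_irr no_lr no_rl; apply/forallP => p; apply/forallP => q; apply/implyP.
rewrite -(splitK p) -(splitK q).
case: (split p) => [i|j]; case: (split q) => [i'|j'] /=;
  rewrite ?pair_vec_lshift ?pair_vec_rshift ?(negbTE (no_lr _ _)) ?(negbTE (no_rl _ _)) //.
- by apply: contraTN => /andP[/eqP-> /eqP[->]]; apply: e_irr.
- by apply: contraTN => /andP[/eqP-> /eqP[->]]; apply: e_irr.
Qed.

Definition pair_weight (o : option 'I_k * option 'I_l) : R :=
  match o with
  | (Some i, Some j) => X (lshift l i) (rshift k j)
  | (Some i, None) => X (lshift l i) (lshift l i) - \sum_j X (lshift l i) (rshift k j)
  | (None, Some j) => X (rshift k j) (rshift k j) - \sum_i X (lshift l i) (rshift k j)
  | (None, None) => 1 - \sum_p X p p + \sum_i \sum_j X (lshift l i) (rshift k j)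
  end.

Lemma pair_weight_ge0 o :
  (forall p q, 0 <= X p q) -> two_clique_ineqs -> 0 <= pair_weight o.
Proof.
move=> X_ge0 [row_le col_le diag_le].
by case: o => [[i|] [j|]] /=; rewrite ?subr_ge0 //; move: diag_le; lra.
Qed.

Lemma pair_weight_row i : \sum_b pair_weight (Some i, b) = X (lshift l i) (lshift l i).
Proof. by rewrite sum_option subrK. Qed.

Lemma pair_weight_col j : \sum_a pair_weight (a, Some j) = X (rshift k j) (rshift k j).
Proof. by rewrite sum_option subrK. Qed.

Lemma pair_weight_sum : \sum_o pair_weight o = 1.
Proof.
rewrite (eq_bigr (fun o => pair_weight (o.1, o.2))); last by case.
rewrite -(pair_bigA _ (fun a b => pair_weight (a, b))) sum_option /=.
under [in S in _ + S]eq_bigr do rewrite pair_weight_row.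
rewrite sum_option /= sumrB big_split_ord /= [\sum_(t < l) \sum_(i < k) _]exchange_big.
lra.
Qed.

Lemma pair_decomposition :
  X^T = X ->
  (forall i i' : 'I_k, i != i' -> X (lshift l i) (lshift l i') = 0) ->
  (forall j j' : 'I_l, j != j' -> X (rshift k j) (rshift k j') = 0) ->
  X = \sum_o pair_weight o *: outer01 R (pair_vec o).
Proof.
move=> X_sym C1_zero C2_zero; apply/matrixP => p q.
rewrite outer01_sum_entry -(splitK p) -(splitK q).
case: (split p) => [i|j]; case: (split q) => [i'|j'] /=;
  under eq_bigl do rewrite ?pair_vec_lshift ?pair_vec_rshift.
- have [<-|ii'] := eqVneq i i'.
    by under eq_bigl do rewrite andbb; rewrite sum_pair_fst pair_weight_row.
  rewrite C1_zero // big_pred0 // => o.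
  by apply/negP => /andP[/eqP-> /eqP[/eqP]]; apply/negP.
- by rewrite (big_pred1 (Some i, Some j')) // => -[a b]; rewrite /= xpair_eqE.
- rewrite -[in LHS]X_sym mxE (big_pred1 (Some i', Some j)) // => -[a b].
  by rewrite /= xpair_eqE andbC.
- have [<-|jj'] := eqVneq j j'.
    by under eq_bigl do rewrite andbb; rewrite sum_pair_snd pair_weight_col.
  rewrite C2_zero // big_pred0 // => o.
  by apply/negP => /andP[/eqP-> /eqP[/eqP]]; apply/negP.
Qed.

Lemma two_clique_ineqs_STAB2 :
  (forall p, ~~ e p p) ->
  (forall i j, ~~ e (lshift l i) (rshift k j)) ->
  (forall i j, ~~ e (rshift k j) (lshift l i)) ->
  X^T = X -> (forall p q, 0 <= X p q) ->
  (forall i i' : 'I_k, i != i' -> X (lshift l i) (lshift l i') = 0) ->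
  (forall j j' : 'I_l, j != j' -> X (rshift k j) (rshift k j') = 0) ->
  two_clique_ineqs -> STAB2 e X.
Proof.
move=> e_irr no_lr no_rl X_sym X_ge0 C1_zero C2_zero X_ineqs.
apply: (@STAB2_of_family _ _ e _ pair_weight pair_vec).
- by move=> o; apply: pair_weight_ge0.
- by move=> o; apply: pair_vec_stable.
- exact: pair_weight_sum.
- exact: pair_decomposition.
Qed.

End TwoCliques.

Theorem lemmaL5 (R : realType) (n k l : nat) (hI : (k + l <= n)%N)
  (e : rel 'I_n) (X : 'M[R]_(k + l)) :
  simple_graph e ->
  (forall i j : 'I_(k + l), i != j -> (i < k)%N -> (j < k)%N ->
     induced_first hI e i j) ->
  (forall i j : 'I_(k + l), i != j -> (k <= i)%N -> (k <= j)%N ->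
     induced_first hI e i j) ->
  (forall i j : 'I_(k + l), (i < k)%N -> (k <= j)%N ->
     ~~ induced_first hI e i j) ->
  psd X ->
  (forall i j, 0 <= X i j) ->
  (forall i j : 'I_(k + l), i != j -> ((i < k)%N = (j < k)%N) -> X i j = 0) ->
  (STAB2 (induced_first hI e) X <->
   [/\ forall i : 'I_k,
         \sum_(j < l) X (lshift l i) (rshift k j) <= X (lshift l i) (lshift l i),
       forall j : 'I_l,
         \sum_(i < k) X (lshift l i) (rshift k j) <= X (rshift k j) (rshift k j)
     & \sum_(i < k + l) X i i <=
         1 + \sum_(i < k) \sum_(j < l) X (lshift l i) (rshift k j)]).
Proof.
move=> [e_sym e_irr] C1_clique C2_clique no_cross [X_sym _] X_ge0 X_block.
have no_rl i j : ~~ induced_first hI e (rshift k j) (lshift l i).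
  by rewrite /induced_first e_sym; apply: no_cross; rewrite /= ?leq_addr.
split.
- apply: STAB2_two_clique_ineqs => [i i' ii'|j j' jj'].
    by apply: C1_clique; rewrite /= ?ltn_ord ?(inj_eq (@lshift_inj _ _)).
  by apply: C2_clique; rewrite /= ?leq_addr ?(inj_eq (@rshift_inj _ _)).
- move=> X_ineqs; apply: two_clique_ineqs_STAB2 => // [p|i j|i i' ii'|j j' jj'].
  + exact: e_irr.
  + by apply: no_cross; rewrite /= ?leq_addr.
  + by apply: X_block; rewrite /= ?ltn_ord ?(inj_eq (@lshift_inj _ _)).
  + by apply: X_block; rewrite /= ?(inj_eq (@rshift_inj _ _)) // !ltnNge !leq_addr.
Qed.
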